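(* Let $(X,d)$ be a locally compact metric space and let $\{A_n\}_{n\ge 1}$ be a sequence of closed, connected subsets of $X$ such that $A_1\supseteq A_2\supseteq\cdots$ and $\bigcap_{n=1}^{\infty}A_n$ is a nonempty compact subset of $X$. Then for every neighborhood $U$ of $\bigcap_{n=1}^{\infty}A_n$ there is a natural number $n$ with $A_n\subseteq U$. *)

From HB Require Import structures.
From mathcomp Require Import all_boot all_order all_algebra.
From mathcomp Require Import all_classical all_reals all_analysis.
Set Implicit Arguments. Unset Strict Implicit. Unset Printing Implicit Defensive.
Import Order.TTheory GRing.Theory Num.Theory.
Local Open Scope classical_set_scope.

From HB Require Import structures.
From mathcomp Require Import all_boot all_order all_algebra.
From mathcomp Require Import all_classical all_reals all_analysis.
Local Open Scope classical_set_scope.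

(** Local compactness and regularity give a compact closed [V] with
    [K `<=` V° `<=` V `<=` U], where [K := \bigcap_n A n].  If no [A n]
    were inside [U], each connected [A n], which meets [V°] at the points
    of [K], would have to cross the compact frontier [V `\` V°]; these
    traces are nested, nonempty and closed, so they share a point, which
    then lies in [K `<=` V°] but not in [V°]. *)

Section compact_neighbourhoods.
Context {T : topologicalType}.

Lemma compact_local_ideal (K : set T) (G : set_system T) :
  compact K -> G set0 ->
  (forall A B, G A -> G B -> G (A `|` B)) ->
  (forall A B, A `<=` B -> G B -> G A) ->
  (forall x, K x -> exists2 N, nbhs x N & G N) -> G K.
Proof.
move=> cK G0 GU GS Gloc; apply: contrapT => nGK.
pose F := filter_from G (fun N => K `\` N).
have FF : ProperFilter F.
  apply: filter_from_proper.
    apply: filter_from_filter; first by exists set0.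
    move=> A B GA GB; exists (A `|` B); first exact: GU.
    by move=> x [Kx nABx]; split; split => // ?; apply: nABx; [left|right].
  move=> N GN; apply/set0P/negP => /eqP; rewrite setD_eq0 => KN.
  exact/nGK/(GS _ _ KN).
have FK : F K by exists set0 => // x [].
have [p [Kp clp]] := cK F FF FK.
have [N Np GN] := Gloc p Kp.
have FN : F (K `\` N) by exists N.
by have [x [[_ nNx] Nx]] := clp _ _ FN Np.
Qed.

Hypothesis lcT : locally_compact [set: T].
Hypothesis regT : regular_space T.

Lemma compact_closed_nbhs_sub (x : T) (U : set T) : nbhs x U ->
  exists W, [/\ compact W, closed W, W `<=` U & nbhs x W].
Proof.
move=> Ux; have [W0 + [cW0 clW0]] := lcT x I; rewrite withinET => W0x.
have [C Cx CU] := regT x U Ux.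
have clW : closed (W0 `&` closure C).
  by apply: closedI => //; exact: closed_closure.
exists (W0 `&` closure C); split => //.
- by apply: (subclosed_compact clW cW0) => ? [].
- by move=> y [_ /CU].
- by apply: filterI => //; apply: filterS Cx; exact: subset_closure.
Qed.

Lemma compact_closed_set_nbhs_sub (K U : set T) :
  compact K -> set_nbhs K U ->
  exists V, [/\ compact V, closed V, V `<=` U & K `<=` V°].
Proof.
move=> cK KU.
pose G N := exists V, [/\ compact V, closed V, V `<=` U & N `<=` V°].
suff : G K by [].
apply: compact_local_ideal => //.
- by exists set0; split => //; [exact: compact0|exact: closed0].
- move=> A B [V1 [cV1 clV1 V1U AV1]] [V2 [cV2 clV2 V2U BV2]].
  exists (V1 `|` V2); split; [exact: compactU|exact: closedU| |].
  + by move=> y [/V1U|/V2U].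
  + by move=> y [/AV1|/BV2]; apply: interiorS => z; [left|right].
- move=> A B AB [V [cV clV VU BV]].
  by exists V; split => //; exact: subset_trans BV.
- move=> x /KU /compact_closed_nbhs_sub [W [cW clW WU Wx]].
  by exists W°; [exact: nbhs_interior|exists W; split].
Qed.

End compact_neighbourhoods.

Lemma connected_meets_frontier {T : topologicalType} (A V : set T) :
  closed V -> connected A -> A `&` V° !=set0 -> ~ A `<=` V° ->
  A `&` (V `\` V°) !=set0.
Proof.
move=> clV cA AV AnV; apply: contrapT => /set0P/negP/negPn/eqP AVV.
apply/AnV/setIidPl/cA => //.
- by exists V° => //; exact: open_interior.
- exists V => //; apply/seteqP; split => x [Ax Vx]; split => //.
    exact: interior_subset.
  apply: contrapT => nVx.
  by have : (A `&` (V `\` V°)) x by []; rewrite AVV.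
Qed.

Lemma compact_nonincreasing_bigcap {T : topologicalType} (S : set T)
    (A : nat -> set T) :
  compact S -> (forall n, closed (A n)) -> (forall n, A n.+1 `<=` A n) ->
  (forall n, A n `&` S !=set0) -> \bigcap_n A n `&` S !=set0.
Proof.
move=> cS clA decA AS.
have leA : {homo A : m n / (m <= n)%N >-> n `<=` m}.
  apply: (@homo_leq _ A (fun B C => C `<=` B)) decA => [B|B C D CB DC].
    exact: subset_refl.
  exact: subset_trans DC CB.
pose F := filter_from setT (fun n => A n `&` S).
have FF : ProperFilter F.
  apply: filter_from_proper => //.
  apply: filter_fromT_filter; first by exists 0%N.
  move=> i j; exists (maxn i j) => x [Ax Sx]; split; split => //.
    exact: leA (leq_maxl i j) _ Ax.
  exact: leA (leq_maxr i j) _ Ax.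
have FS : F S by exists 0%N => // ? [].
have [p [Sp clp]] := cS F FF FS; exists p; split => // n _.
apply: (clA n) => N Np.
have FAn : F (A n `&` S) by exists n.
by have [x [[Ax _] Nx]] := clp _ _ FAn Np; exists x.
Qed.

Theorem lemma3p2 (R : realType) (X : metricType R) (A : nat -> set X) :
  locally_compact [set: X] ->
  (forall n, closed (A n)) ->
  (forall n, connected (A n)) ->
  (forall n, A n.+1 `<=` A n) ->
  \bigcap_n A n !=set0 ->
  compact (\bigcap_n A n) ->
  forall U : set X, set_nbhs (\bigcap_n A n) U ->
  exists n, A n `<=` U.
Proof.
move=> lcX clA cA decA [k Kk] cK U KU.
have [V [cV clV VU KV]] :=
  compact_closed_set_nbhs_sub lcX uniform_regular _ _ cK KU.
apply: contrapT => /forallNP AnU.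
have AV n : A n `&` (V `\` V°) !=set0.
  apply: connected_meets_frontier => //.
    by exists k; split; [exact: Kk|exact: KV].
  by move=> AnV; apply: (AnU n) => x /AnV /interior_subset /VU.
have cVV : compact (V `\` V°).
  exact/compact_closedI/open_closedC/open_interior.
have [p [Kp [_ nVp]]] := compact_nonincreasing_bigcap _ _ cVV clA decA AV.
exact: nVp (KV p Kp).
Qed.
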